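(* There exists a constant $c>0$ such that for all sufficiently large $n$ and all $r\ge0$, $0<\epsilon\le 1$, $R>\epsilon$, with probability at least $1-1/n$ the flooding time of the stationary geometric-MEG $\mathcal{G}(n,r,R,\epsilon)$ is at least $c\,\frac{\sqrt n}{R+r}$.
   Context: $L_{n,\epsilon}=\{(i\epsilon,j\epsilon): i,j\in\mathbb{N},\ i,j\le\sqrt n/\epsilon\}$; $\Gamma(\mathbf{x})=\{\mathbf{y}\in L_{n,\epsilon}:d(\mathbf{x},\mathbf{y})\le r\}$ with $d$ Euclidean distance. Each node $i\in[n]$ has position $P_{i,t}\in L_{n,\epsilon}$ evolving independently as a Markov chain that moves from $\mathbf{x}$ to a uniform random point of $\Gamma(\mathbf{x})$. The geometric-MEG $\mathcal{G}(n,r,R,\epsilon)=\{G_t\}$ has $G_t=([n],E_t)$, $E_t=\{\{i,j\}: d(P_{i,t},P_{j,t})\le R\}$. It is stationary when the initial positions are independent with law $\pi(\mathbf{x})=|\Gamma(\mathbf{x})|/\sum_{\mathbf{y}}|\Gamma(\mathbf{y})|$. Flooding from source $s$: $I_0=\{s\}$, $I_{t+1}=I_t\cup N_t(I_t)$, where $N_t(I)$ is the set of nodes outside $I$ adjacent in $G_t$ to a node of $I$; $T(s)$ is the first $t$ with $I_t=[n]$, and the flooding time is $\max_s T(s)$. *)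

From Stdlib Require Import Reals List Arith ZArith Bool.
Open Scope bool_scope.
Import ListNotations.
Open Scope R_scope.

(** Lattice points (i*eps, j*eps) are represented by index pairs (i,j). *)
Definition point : Type := (nat * nat)%type.

Definition pt_eqb (p q : point) : bool :=
  Nat.eqb (fst p) (fst q) && Nat.eqb (snd p) (snd q).

Definition dist_pt (eps : R) (p q : point) : R :=
  sqrt ((INR (fst p) * eps - INR (fst q) * eps) ^ 2 +
        (INR (snd p) * eps - INR (snd q) * eps) ^ 2).

Definition Rleb (a b : R) : bool := if Rle_dec a b then true else false.
Definition Rltb (a b : R) : bool := if Rlt_dec a b then true else false.

(** L_{n,eps} = {(i eps, j eps) : i,j in N, i,j <= sqrt n / eps} *)
Definition lat_bound (n : nat) (eps : R) : R := sqrt (INR n) / eps.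

Definition lattice (n : nat) (eps : R) : list point :=
  let N := (Z.to_nat (up (lat_bound n eps)) + 1)%nat in
  let idx := filter (fun i => Rleb (INR i) (lat_bound n eps)) (seq 0 N) in
  list_prod idx idx.

Definition Gamma (n : nat) (r eps : R) (x : point) : list point :=
  filter (fun y => Rleb (dist_pt eps x y) r) (lattice n eps).

Definition trans (n : nat) (r eps : R) (x y : point) : R :=
  if existsb (pt_eqb y) (Gamma n r eps x)
  then / INR (length (Gamma n r eps x)) else 0.

Definition Rsum (l : list R) : R := fold_right Rplus 0 l.
Definition Rprod (l : list R) : R := fold_right Rmult 1 l.

Definition pi_stat (n : nat) (r eps : R) (x : point) : R :=
  INR (length (Gamma n r eps x)) /
  Rsum (map (fun y => INR (length (Gamma n r eps y))) (lattice n eps)).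

(** A configuration lists the positions of nodes 0..n-1. *)
Definition config : Type := list point.
Definition dpt : point := (0%nat, 0%nat).

Fixpoint all_lists {A : Type} (l : list A) (m : nat) : list (list A) :=
  match m with
  | O => [[]]
  | S m' => flat_map (fun a => map (cons a) (all_lists l m')) l
  end.

Definition init_weight (n : nat) (r eps : R) (c : config) : R :=
  Rprod (map (fun i => pi_stat n r eps (nth i c dpt)) (seq 0 n)).

Definition step_weight (n : nat) (r eps : R) (c c' : config) : R :=
  Rprod (map (fun i => trans n r eps (nth i c dpt) (nth i c' dpt)) (seq 0 n)).

Fixpoint chain_weight (n : nat) (r eps : R) (c : config) (rest : list config) : R :=
  match rest with
  | [] => 1
  | c' :: rest' => step_weight n r eps c c' * chain_weight n r eps c' rest'
  end.

(** Probability of the trajectory (P_{.,0}, ..., P_{.,H-1}) of the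
    stationary process (independent nodes, stationary initial law). *)
Definition traj_weight (n : nat) (r eps : R) (traj : list config) : R :=
  match traj with
  | [] => 1
  | c :: rest => init_weight n r eps c * chain_weight n r eps c rest
  end.

Definition prob (n : nat) (r eps : R) (H : nat) (E : list config -> bool) : R :=
  Rsum (map (traj_weight n r eps)
            (filter E (all_lists (all_lists (lattice n eps) n) H))).

Definition adj (Rr eps : R) (c : config) (i j : nat) : bool :=
  Rleb (dist_pt eps (nth i c dpt) (nth j c dpt)) Rr.

(** I_{t+1} = I_t  ∪  N_t(I_t)  (sets of nodes as boolean predicates). *)
Definition flood_step (n : nat) (Rr eps : R) (I : nat -> bool) (c : config)
  : nat -> bool :=
  fun k => I k || existsb (fun j => I j && adj Rr eps c j k) (seq 0 n).

(** I_t for source s, given the configurations at times 0..t-1. *)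
Definition infected (n : nat) (Rr eps : R) (s : nat) (pre : list config)
  : nat -> bool :=
  fold_left (flood_step n Rr eps) pre (fun k => Nat.eqb k s).

Definition full (n : nat) (I : nat -> bool) : bool := forallb I (seq 0 n).

(** Event "flooding time >= tau" = exists source s such that
    I_t(s) <> [n] for every integer t >= 0 with t < tau.
    Here H is a horizon with tau < H. *)
Definition flood_ge (n : nat) (Rr eps : R) (H : nat) (tau : R)
  (traj : list config) : bool :=
  existsb (fun s =>
    forallb (fun t => if Rltb (INR t) tau
                      then negb (full n (infected n Rr eps s (firstn t traj)))
                      else true)
            (seq 0 (S H)))
    (seq 0 n).

Definition horizon (tau : R) : nat := Z.to_nat (up tau).

Definition prob_flooding_ge (n : nat) (r Rr eps tau : R) : R :=
  prob n r eps (horizon tau) (flood_ge n Rr eps (horizon tau) tau).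

(* The flooding message cannot outrun the nodes: in one step the informed set grows by at most
   R (a hop) plus r (a move), and every node moves at most r.  Hence if flooding from node 0 ends
   before time tau, all initial positions lie within 2 tau (R + r) of node 0, i.e. in a disc of
   diameter sqrt n / 8 when tau = sqrt n / (32 (R + r)).  But the left quarter-strip and the right
   quarter-strip of the square are sqrt n / 2 apart, and each has stationary mass at least 1/16:
   squeezing the square horizontally by a factor 4 into the strip is non-expanding and at most
   4-to-1, so |Gamma(x)| <= 4 |Gamma(psi x)| and the normalising constant is at most
   16 sum_{strip} |Gamma|.  So flooding is fast only if one of the two strips is empty at time 0,
   an event of probability at most 2 (15/16)^n <= 1/n. *)
From Stdlib Require Import Reals Lra Lia Psatz List Arith ZArith Bool Rgeom FinFun.
Import ListNotations.
Open Scope R_scope.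

(** * Finite sums and products over lists *)

Lemma Rsum_app (l1 l2 : list R) : Rsum (l1 ++ l2) = Rsum l1 + Rsum l2.
Proof. induction l1; simpl; [lra|]. rewrite IHl1; lra. Qed.

Lemma Rsum_map_ext_in {A} (f g : A -> R) l :
  (forall x, In x l -> f x = g x) -> Rsum (map f l) = Rsum (map g l).
Proof. intros H; f_equal; apply map_ext_in; auto. Qed.

Lemma Rsum_map_le {A} (f g : A -> R) l :
  (forall x, In x l -> f x <= g x) -> Rsum (map f l) <= Rsum (map g l).
Proof.
  induction l; simpl; intros H; [lra|].
  assert (f a <= g a) by auto. assert (Rsum (map f l) <= Rsum (map g l)) by auto. lra.
Qed.

Lemma Rsum_map_scal {A} (f : A -> R) k l :
  Rsum (map (fun x => k * f x) l) = k * Rsum (map f l).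
Proof. induction l; simpl; [ring|]. rewrite IHl; ring. Qed.

Lemma Rsum_map_plus {A} (f g : A -> R) l :
  Rsum (map (fun x => f x + g x) l) = Rsum (map f l) + Rsum (map g l).
Proof. induction l; simpl; [ring|]. rewrite IHl; ring. Qed.

Lemma Rsum_map_minus {A} (f g : A -> R) l :
  Rsum (map (fun x => f x - g x) l) = Rsum (map f l) - Rsum (map g l).
Proof. induction l; simpl; [ring|]. rewrite IHl; ring. Qed.

Lemma Rsum_map_nonneg {A} (f : A -> R) l :
  (forall x, In x l -> 0 <= f x) -> 0 <= Rsum (map f l).
Proof.
  induction l; simpl; intros H; [lra|].
  assert (0 <= f a) by auto. assert (0 <= Rsum (map f l)) by auto. lra.
Qed.

Lemma Rsum_map_ge_term {A} (f : A -> R) l x :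
  In x l -> (forall y, In y l -> 0 <= f y) -> f x <= Rsum (map f l).
Proof.
  induction l as [|a l IH]; simpl; [tauto|]. intros [->|Hx] H.
  - assert (0 <= Rsum (map f l)) by (apply Rsum_map_nonneg; auto). lra.
  - assert (0 <= f a) by auto. assert (f x <= Rsum (map f l)) by auto. lra.
Qed.

Lemma Rsum_map_filter {A} (f : A -> R) (P : A -> bool) l :
  Rsum (map f (filter P l)) = Rsum (map (fun x => if P x then f x else 0) l).
Proof. induction l; simpl; auto. destruct (P a); simpl; rewrite IHl; ring. Qed.

Lemma Rsum_map_indicator {A} (P : A -> bool) c l :
  Rsum (map (fun x => if P x then c else 0) l) = INR (length (filter P l)) * c.
Proof.
  induction l; simpl; [ring|]. destruct (P a); cbn [length]; rewrite IHl; [|ring].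
  rewrite S_INR; ring.
Qed.

Lemma Rsum_map_ones {A} (l : list A) : Rsum (map (fun _ => 1) l) = INR (length l).
Proof.
  rewrite <- (filter_true l) at 2. rewrite <- (Rmult_1_r (INR _)), <- Rsum_map_indicator.
  reflexivity.
Qed.

Lemma Rsum_flat_map_cons {A} (F : list A -> R) (M : list A) (L : list (list A)) :
  Rsum (map F (flat_map (fun a => map (cons a) L) M)) =
  Rsum (map (fun a => Rsum (map (fun l => F (a :: l)) L)) M).
Proof. induction M; simpl; auto. rewrite map_app, Rsum_app, IHM, map_map. reflexivity. Qed.

Lemma Rprod_map_ext_in {A} (f g : A -> R) l :
  (forall x, In x l -> f x = g x) -> Rprod (map f l) = Rprod (map g l).
Proof. intros H; f_equal; apply map_ext_in; auto. Qed.

Lemma Rprod_map_nonneg {A} (f : A -> R) l :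
  (forall x, In x l -> 0 <= f x) -> 0 <= Rprod (map f l).
Proof. induction l; simpl; intros H; [lra|]. apply Rmult_le_pos; auto. Qed.

Lemma Rprod_map_neq0 {A} (f : A -> R) l x :
  Rprod (map f l) <> 0 -> In x l -> f x <> 0.
Proof.
  induction l; simpl; [tauto|]. intros H [->|Hx].
  - intro E; apply H; rewrite E; ring.
  - apply IHl; auto. intro E; apply H; rewrite E; ring.
Qed.

Lemma Rprod_map_mult {A} (f g : A -> R) l :
  Rprod (map f l) * Rprod (map g l) = Rprod (map (fun x => f x * g x) l).
Proof. induction l; simpl; [ring|]. rewrite <- IHl; ring. Qed.

Lemma Rprod_map_const {A} (q : R) (l : list A) : Rprod (map (fun _ => q) l) = q ^ length l.
Proof. induction l; simpl; auto. rewrite IHl; ring. Qed.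

Lemma Rprod_map_indicator {A} (p : A -> bool) l :
  (if forallb p l then 1 else 0) = Rprod (map (fun i => if p i then 1 else 0) l).
Proof. induction l; simpl; auto. destruct (p a); simpl; [rewrite <- IHl|]; ring. Qed.

Lemma forallb_false {A} (f : A -> bool) l :
  forallb f l = false -> exists x, In x l /\ f x = false.
Proof.
  induction l; simpl; [discriminate|]. destruct (f a) eqn:E; simpl; intros H; eauto.
  destruct (IHl H) as [x [Hx Ex]]; eauto.
Qed.

Lemma In_all_lists {A} (L : list A) (d : A) m c :
  In c (all_lists L m) -> forall i, (i < m)%nat -> In (nth i c d) L.
Proof.
  revert c; induction m; intros c Hc i Hi; [lia|].
  cbn [all_lists] in Hc. apply in_flat_map in Hc. destruct Hc as [a [Ha Hc]].
  apply in_map_iff in Hc. destruct Hc as [c' [<- Hc']].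
  destruct i; simpl; auto. apply IHm; auto; lia.
Qed.

Lemma all_lists_length {A} (L : list A) m c : In c (all_lists L m) -> length c = m.
Proof.
  revert c; induction m; intros c Hc.
  - simpl in Hc. destruct Hc as [<-|[]]; auto.
  - cbn [all_lists] in Hc. apply in_flat_map in Hc. destruct Hc as [a [_ Hc]].
    apply in_map_iff in Hc. destruct Hc as [c' [<- Hc']]. simpl; f_equal; auto.
Qed.

Lemma Rsum_all_lists_Rprod {A} (L : list A) (d : A) m (f : nat -> A -> R) :
  Rsum (map (fun c => Rprod (map (fun i => f i (nth i c d)) (seq 0 m))) (all_lists L m))
  = Rprod (map (fun i => Rsum (map (f i) L)) (seq 0 m)).
Proof.
  revert f; induction m; intros f; [simpl; ring|].
  cbn [all_lists]. rewrite Rsum_flat_map_cons.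
  set (P := Rprod (map (fun i => Rsum (map (f (S i)) L)) (seq 0 m))).
  transitivity (Rsum (map (fun a => P * f 0%nat a) L)).
  - apply Rsum_map_ext_in; intros a _. rewrite Rmult_comm. unfold P.
    rewrite <- (IHm (fun i => f (S i))), <- Rsum_map_scal.
    apply Rsum_map_ext_in; intros c _. cbn [seq map nth]. rewrite <- seq_shift, map_map.
    reflexivity.
  - rewrite Rsum_map_scal. cbn [seq map]. rewrite <- seq_shift, map_map. unfold P.
    apply Rmult_comm.
Qed.

(** * Geometry of the lattice *)

Lemma pt_eqb_eq p q : pt_eqb p q = true <-> p = q.
Proof.
  destruct p as [a b], q as [c d]; unfold pt_eqb; simpl.
  rewrite andb_true_iff, !Nat.eqb_eq. split; [intros [-> ->]; auto | intros H; inversion H; auto].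
Qed.

Lemma existsb_pt_eqb_In y l : existsb (pt_eqb y) l = true <-> In y l.
Proof.
  rewrite existsb_exists. split.
  - intros [x [Hx E]]. apply pt_eqb_eq in E. subst; auto.
  - intros H; exists y; split; auto. apply pt_eqb_eq; auto.
Qed.

Lemma dist_pt_euc eps p q : dist_pt eps p q =
  dist_euc (INR (fst p) * eps) (INR (snd p) * eps) (INR (fst q) * eps) (INR (snd q) * eps).
Proof. unfold dist_pt, dist_euc, Rsqr. f_equal. ring. Qed.

Lemma dist_pt_triangle eps p q s : dist_pt eps p q <= dist_pt eps p s + dist_pt eps s q.
Proof. rewrite !dist_pt_euc. apply triangle. Qed.

Lemma dist_pt_sym eps p q : dist_pt eps p q = dist_pt eps q p.
Proof. rewrite !dist_pt_euc. apply distance_symm. Qed.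

Lemma dist_pt_refl eps p : dist_pt eps p p = 0.
Proof. rewrite !dist_pt_euc. apply distance_refl. Qed.

Lemma dist_pt_ge_fst eps p q : Rabs (INR (fst p) * eps - INR (fst q) * eps) <= dist_pt eps p q.
Proof.
  unfold dist_pt. rewrite <- sqrt_Rsqr_abs. apply sqrt_le_1_alt.
  unfold Rsqr. set (v := INR (snd p) * eps - _). assert (0 <= v ^ 2) by (simpl; nra). simpl; lra.
Qed.

Lemma dist_pt_le_of_coords_le eps a b a' b' x y x' y' :
  Rabs (INR x - INR x') <= Rabs (INR a - INR a') ->
  Rabs (INR y - INR y') <= Rabs (INR b - INR b') ->
  dist_pt eps (x, y) (x', y') <= dist_pt eps (a, b) (a', b').
Proof.
  intros H1 H2. unfold dist_pt; cbn [fst snd]. apply sqrt_le_1_alt.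
  assert (Sq : forall u v, Rabs u <= Rabs v -> u ^ 2 <= v ^ 2).
  { intros u v Huv. rewrite <- (pow2_abs u), <- (pow2_abs v).
    apply pow_incr; split; [apply Rabs_pos|auto]. }
  apply Sq in H1; apply Sq in H2.
  assert (Hsc : forall u v, (u * eps - v * eps) ^ 2 = (u - v) ^ 2 * eps ^ 2) by (intros; ring).
  rewrite (Hsc (INR x)), (Hsc (INR y)), (Hsc (INR a)), (Hsc (INR b)).
  assert (0 <= eps ^ 2) by nra. nra.
Qed.

Lemma NoDup_list_prod {A B} (l : list A) (l' : list B) :
  NoDup l -> NoDup l' -> NoDup (list_prod l l').
Proof.
  induction l; simpl; intros H H'; [constructor|].
  inversion H; subst. apply NoDup_app; auto.
  - apply Injective_map_NoDup; auto. intros x y E; inversion E; auto.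
  - intros [x y] Hx Hy. apply in_map_iff in Hx. destruct Hx as [z [E _]]. inversion E; subst.
    apply in_prod_iff in Hy. tauto.
Qed.

Lemma lattice_NoDup n eps : NoDup (lattice n eps).
Proof. unfold lattice. apply NoDup_list_prod; apply NoDup_filter, seq_NoDup. Qed.

(* The largest index [K] with [K eps <= sqrt n]; the lattice is the square [0, K]^2. *)
Definition lattice_side (n : nat) (eps : R) : nat := (Z.to_nat (up (lat_bound n eps)) - 1)%nat.

Lemma lattice_side_spec n eps : 0 < eps ->
  (forall i, INR i <= lat_bound n eps <-> (i <= lattice_side n eps)%nat) /\
  INR (lattice_side n eps) > lat_bound n eps - 1.
Proof.
  intros He. unfold lattice_side. set (lb := lat_bound n eps).
  assert (Hlb : 0 <= lb).
  { unfold lb, lat_bound, Rdiv. apply Rmult_le_pos; [apply sqrt_pos|].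
    left; apply Rinv_0_lt_compat; lra. }
  destruct (archimed lb) as [A1 A2]. set (z := up lb) in *.
  assert (Hz : (1 <= z)%Z) by (assert (0 < z)%Z by (apply lt_0_IZR; lra); lia).
  assert (HK : INR (Z.to_nat z - 1) = IZR z - 1).
  { rewrite minus_INR by lia. rewrite INR_IZR_INZ, Z2Nat.id by lia. simpl; lra. }
  split; [|lra]. intros i; split; intros Hi.
  - assert (Z.of_nat i < z)%Z by (apply lt_IZR; rewrite <- INR_IZR_INZ; lra). lia.
  - apply le_INR in Hi. lra.
Qed.

Lemma In_lattice n eps p : 0 < eps ->
  In p (lattice n eps) <-> (fst p <= lattice_side n eps /\ snd p <= lattice_side n eps)%nat.
Proof.
  intros He. destruct (lattice_side_spec n eps He) as [Hiff _].
  assert (Hidx : forall i,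
    In i (filter (fun i => Rleb (INR i) (lat_bound n eps))
                 (seq 0 (Z.to_nat (up (lat_bound n eps)) + 1)))
    <-> (i <= lattice_side n eps)%nat).
  { intros i. rewrite filter_In, in_seq. unfold Rleb.
    destruct (Rle_dec (INR i) (lat_bound n eps)) as [Hi|Hi]; rewrite Hiff in Hi.
    - unfold lattice_side in *. split; [tauto|]. intros _; split; [lia|auto].
    - split; [intros [_ F]; discriminate|tauto]. }
  destruct p as [a b]. unfold lattice; cbv zeta. cbn [fst snd].
  rewrite <- !Hidx. split; intros H; [apply in_prod_iff in H | apply in_prod_iff]; tauto.
Qed.

(** * The move kernel and its stationary law *)

Lemma In_Gamma n r eps x y :
  In y (Gamma n r eps x) <-> In y (lattice n eps) /\ dist_pt eps x y <= r.
Proof.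
  unfold Gamma. rewrite filter_In. unfold Rleb.
  destruct (Rle_dec (dist_pt eps x y) r); split; intros [? ?]; auto; try discriminate; tauto.
Qed.

Lemma Gamma_length_ge1 n r eps x : 0 <= r -> In x (lattice n eps) ->
  1 <= INR (length (Gamma n r eps x)).
Proof.
  intros Hr Hx. assert (Hin : In x (Gamma n r eps x)) by (apply In_Gamma; rewrite dist_pt_refl; auto).
  destruct (Gamma n r eps x); [contradiction|]. cbn [length]. rewrite S_INR.
  pose proof (pos_INR (length l)). lra.
Qed.

Definition Gamma_total (n : nat) (r eps : R) : R :=
  Rsum (map (fun y => INR (length (Gamma n r eps y))) (lattice n eps)).

Lemma Gamma_total_pos n r eps : 0 <= r -> 0 < eps -> 0 < Gamma_total n r eps.
Proof.
  intros Hr He.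
  assert (H0 : In (0%nat, 0%nat) (lattice n eps)) by (apply In_lattice; simpl; auto; lia).
  apply Rlt_le_trans with 1; [lra|].
  eapply Rle_trans; [exact (Gamma_length_ge1 n r eps _ Hr H0)|].
  apply (Rsum_map_ge_term (fun y => INR (length (Gamma n r eps y)))); auto.
  intros; apply pos_INR.
Qed.

Lemma pi_stat_eq n r eps x :
  pi_stat n r eps x = / Gamma_total n r eps * INR (length (Gamma n r eps x)).
Proof. unfold pi_stat, Gamma_total, Rdiv. ring. Qed.

Lemma pi_stat_nonneg n r eps x : 0 <= r -> 0 < eps -> 0 <= pi_stat n r eps x.
Proof.
  intros Hr He. rewrite pi_stat_eq. apply Rmult_le_pos; [|apply pos_INR].
  left; apply Rinv_0_lt_compat, Gamma_total_pos; auto.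
Qed.

Lemma pi_stat_sum n r eps : 0 <= r -> 0 < eps ->
  Rsum (map (pi_stat n r eps) (lattice n eps)) = 1.
Proof.
  intros Hr He. rewrite (Rsum_map_ext_in _ _ _ (fun x _ => pi_stat_eq n r eps x)).
  rewrite Rsum_map_scal. fold (Gamma_total n r eps).
  pose proof (Gamma_total_pos n r eps Hr He). field. lra.
Qed.

Lemma trans_nonneg n r eps x y : 0 <= trans n r eps x y.
Proof.
  unfold trans. destruct existsb; [|lra].
  destruct (length (Gamma n r eps x)) eqn:E; [simpl; rewrite Rinv_0; lra|].
  left; apply Rinv_0_lt_compat, lt_0_INR; lia.
Qed.

Lemma trans_neq0_dist_le n r eps x y : trans n r eps x y <> 0 -> dist_pt eps x y <= r.
Proof.
  unfold trans. destruct existsb eqn:E; [|lra]. intros _.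
  apply existsb_pt_eqb_In, In_Gamma in E. tauto.
Qed.

Lemma trans_sum n r eps x : 0 <= r -> In x (lattice n eps) ->
  Rsum (map (trans n r eps x) (lattice n eps)) = 1.
Proof.
  intros Hr Hx. unfold trans.
  rewrite (Rsum_map_ext_in _
    (fun y => if Rleb (dist_pt eps x y) r then / INR (length (Gamma n r eps x)) else 0)).
  - rewrite Rsum_map_indicator. fold (Gamma n r eps x).
    pose proof (Gamma_length_ge1 n r eps x Hr Hx). field. lra.
  - intros y Hy. replace (existsb (pt_eqb y) (Gamma n r eps x)) with (Rleb (dist_pt eps x y) r);
      [reflexivity|]. apply eq_true_iff_eq. rewrite existsb_pt_eqb_In, In_Gamma.
    unfold Rleb. destruct (Rle_dec (dist_pt eps x y) r); intuition discriminate.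
Qed.

(** * Stationary mass of the two quarter-strips *)

Definition stat_mass (n : nat) (r eps : R) (S : point -> bool) : R :=
  Rsum (map (fun x => if S x then pi_stat n r eps x else 0) (lattice n eps)).

Lemma stat_mass_nonneg n r eps S : 0 <= r -> 0 < eps -> 0 <= stat_mass n r eps S.
Proof.
  intros Hr He. apply Rsum_map_nonneg. intros x _.
  destruct (S x); [apply pi_stat_nonneg; auto|lra].
Qed.

Lemma stat_mass_compl n r eps S : 0 <= r -> 0 < eps ->
  stat_mass n r eps (fun x => negb (S x)) = 1 - stat_mass n r eps S.
Proof.
  intros Hr He. rewrite <- (pi_stat_sum n r eps Hr He). unfold stat_mass.
  rewrite <- Rsum_map_minus. apply Rsum_map_ext_in. intros x _. destruct (S x); simpl; ring.
Qed.

Lemma Rsum_pt_eqb_notin (c : point) (v : point -> R) l :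
  ~ In c l -> Rsum (map (fun b => if pt_eqb c b then v b else 0) l) = 0.
Proof.
  induction l; simpl; intros H; auto. destruct (pt_eqb c a) eqn:E.
  - apply pt_eqb_eq in E. subst. tauto.
  - rewrite IHl; auto. ring.
Qed.

Lemma Rsum_pt_eqb_in (c : point) (v : point -> R) l :
  NoDup l -> In c l -> Rsum (map (fun b => if pt_eqb c b then v b else 0) l) = v c.
Proof.
  induction l; simpl; intros Hn Hi; [contradiction|]. inversion Hn; subst.
  destruct (pt_eqb c a) eqn:E.
  - apply pt_eqb_eq in E. subst. rewrite Rsum_pt_eqb_notin; auto. ring.
  - destruct Hi as [<-|Hi]; [rewrite (proj2 (pt_eqb_eq a a)) in E; auto; discriminate|].
    rewrite IHl; auto. ring.
Qed.

(* Regrouping the sum over [l] by the fibres of [f] over [l']. *)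
Lemma Rsum_le_fiber (l l' : list point) (f : point -> point) (w v : point -> R) (k : nat) :
  NoDup l -> NoDup l' -> (forall a, In a l -> In (f a) l') ->
  (forall a, In a l -> w a <= v (f a)) -> (forall b, In b l' -> 0 <= v b) ->
  (forall b, exists F, (length F <= k)%nat /\ forall a, In a l -> f a = b -> In a F) ->
  Rsum (map w l) <= INR k * Rsum (map v l').
Proof.
  intros Hl Hl' Hf Hw Hv Hk.
  apply Rle_trans with (Rsum (map (fun a => v (f a)) l)); [apply Rsum_map_le; auto|].
  assert (E : Rsum (map (fun a => v (f a)) l) =
    Rsum (map (fun b => INR (length (filter (fun a => pt_eqb (f a) b) l)) * v b) l')).
  { clear Hl Hw Hk. induction l as [|a l IH]; simpl.
    - symmetry. rewrite (Rsum_map_ext_in _ (fun _ => 0 * 0)) by (intros; simpl; ring).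
      rewrite Rsum_map_scal; ring.
    - rewrite IH by (intros; apply Hf; simpl; auto).
      rewrite <- (Rsum_pt_eqb_in (f a) v l') at 1 by (auto; apply Hf; simpl; auto).
      rewrite <- Rsum_map_plus. apply Rsum_map_ext_in. intros b _.
      destruct (pt_eqb (f a) b); cbn [length]; [rewrite S_INR|]; ring. }
  rewrite E, <- Rsum_map_scal. apply Rsum_map_le. intros b Hb.
  apply Rmult_le_compat_r; auto. apply le_INR.
  destruct (Hk b) as [F [HF HFb]]. apply Nat.le_trans with (length F); auto.
  apply NoDup_incl_length; [apply NoDup_filter; auto|].
  intros a Ha. apply filter_In in Ha. destruct Ha as [Ha E']. apply pt_eqb_eq in E'. auto.
Qed.

(* A non-expanding map of the lattice into [S] that is at most [m]-to-1 shrinks each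
   neighbourhood size by at most [m], and [S] receives the images of at most [m] points each. *)
Lemma stat_mass_ge_of_compression n r eps (S : point -> bool) (psi : point -> point) m :
  0 <= r -> 0 < eps ->
  (forall x, In x (lattice n eps) -> In (psi x) (lattice n eps) /\ S (psi x) = true) ->
  (forall x y, In x (lattice n eps) -> In y (lattice n eps) ->
     dist_pt eps (psi x) (psi y) <= dist_pt eps x y) ->
  (forall b, exists F, (length F <= m)%nat /\
     forall a, In a (lattice n eps) -> psi a = b -> In a F) ->
  1 <= INR m ^ 2 * stat_mass n r eps S.
Proof.
  intros Hr He Hpsi Hlip Hfib. set (L := lattice n eps) in *.
  set (g := fun x => INR (length (Gamma n r eps x))).
  assert (Hg : forall x, In x L -> g x <= INR m * g (psi x)).
  { intros x Hx. unfold g. rewrite <- !Rsum_map_ones.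
    apply Rsum_le_fiber with (f := psi); try (intros; lra).
    - apply NoDup_filter, lattice_NoDup.
    - apply NoDup_filter, lattice_NoDup.
    - intros a Ha. apply In_Gamma in Ha. apply In_Gamma. destruct Ha as [Ha Hd].
      split; [apply Hpsi; auto|]. eapply Rle_trans; [apply Hlip|]; eauto.
    - intros b. destruct (Hfib b) as [F [HF HFb]]. exists F. split; auto.
      intros a Ha. apply HFb. apply In_Gamma in Ha. tauto. }
  assert (HZ : Gamma_total n r eps <= INR m * Rsum (map (fun y => INR m * g y) (filter S L))).
  { apply Rsum_le_fiber with (f := psi); auto.
    - apply lattice_NoDup.
    - apply NoDup_filter, lattice_NoDup.
    - intros a Ha. apply filter_In. apply Hpsi; auto.
    - intros b _. assert (0 <= INR m) by apply pos_INR. unfold g.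
      pose proof (pos_INR (length (Gamma n r eps b))). nra. }
  rewrite Rsum_map_scal, Rsum_map_filter in HZ.
  unfold stat_mass. fold L.
  rewrite (Rsum_map_ext_in _ (fun x => / Gamma_total n r eps * (if S x then g x else 0))).
  2:{ intros x _. destruct (S x); [apply pi_stat_eq|ring]. }
  rewrite Rsum_map_scal. pose proof (Gamma_total_pos n r eps Hr He).
  apply Rmult_le_reg_l with (Gamma_total n r eps); auto.
  replace (Gamma_total n r eps * (INR m ^ 2 * (/ Gamma_total n r eps *
             Rsum (map (fun x => if S x then g x else 0) L))))
    with (INR m * (INR m * Rsum (map (fun x => if S x then g x else 0) L))) by (field; lra).
  lra.
Qed.

Lemma Rabs_INR_le_of_contraction (h : nat -> nat) K :
  (forall i j, (i <= j <= K)%nat -> (h i <= h j /\ h j - h i <= j - i)%nat) ->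
  forall i j, (i <= K)%nat -> (j <= K)%nat ->
  Rabs (INR (h i) - INR (h j)) <= Rabs (INR i - INR j).
Proof.
  intros H.
  assert (W : forall i j, (i <= j <= K)%nat -> Rabs (INR (h i) - INR (h j)) <= Rabs (INR i - INR j)).
  { intros i j Hij. destruct (H i j Hij) as [H1 H2].
    rewrite (Rabs_minus_sym (INR (h i))), (Rabs_minus_sym (INR i)).
    rewrite <- !minus_INR by lia. rewrite !Rabs_right by (apply Rle_ge, pos_INR).
    apply le_INR; auto. }
  intros i j Hi Hj. destruct (Nat.le_ge_cases i j); [apply W; lia|].
  rewrite (Rabs_minus_sym (INR (h i))), (Rabs_minus_sym (INR i)). apply W; lia.
Qed.

Lemma strip_mass_ge_of_squeeze n r eps (h : nat -> nat) (Sb : nat -> bool) m :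
  0 <= r -> 0 < eps ->
  (forall i, (i <= lattice_side n eps)%nat -> (h i <= lattice_side n eps)%nat /\ Sb (h i) = true) ->
  (forall i j, (i <= j <= lattice_side n eps)%nat -> (h i <= h j /\ h j - h i <= j - i)%nat) ->
  (forall b, exists F, (length F <= m)%nat /\
     forall a, (a <= lattice_side n eps)%nat -> h a = b -> In a F) ->
  1 <= INR m ^ 2 * stat_mass n r eps (fun x => Sb (fst x)).
Proof.
  intros Hr He Hh Hmono Hfib.
  apply stat_mass_ge_of_compression with (psi := fun p => (h (fst p), snd p)); auto.
  - intros [a b] Hx. apply In_lattice in Hx; auto. simpl in *.
    destruct (Hh a) as [H1 H2]; [tauto|]. split; auto. apply In_lattice; simpl; tauto.
  - intros [a b] [c d] Hx Hy. apply In_lattice in Hx, Hy; auto. simpl in *.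
    apply dist_pt_le_of_coords_le; [|apply Rle_refl].
    apply (Rabs_INR_le_of_contraction h (lattice_side n eps)); tauto.
  - intros [b1 b2]. destruct (Hfib b1) as [F [HF HFb]].
    exists (map (fun i => (i, b2)) F). split; [rewrite length_map; auto|].
    intros [a1 a2] Ha E. apply In_lattice in Ha; auto. injection E as E1 E2. simpl in *.
    subst. apply in_map_iff. exists a1. split; auto. apply HFb; tauto.
Qed.

Definition left_strip (K i : nat) : bool := Nat.leb (4 * i) K.
Definition right_strip (K i : nat) : bool := Nat.leb (4 * (K - i)) K.

Lemma left_strip_mass n r eps : 0 <= r -> 0 < eps ->
  1 <= 16 * stat_mass n r eps (fun x => left_strip (lattice_side n eps) (fst x)).
Proof.
  intros Hr He. replace 16 with (INR 4 ^ 2) by (simpl; ring).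
  set (K := lattice_side n eps).
  assert (Hdiv : forall x, (4 * (x / 4) <= x < 4 * (x / 4) + 4)%nat).
  { intros x. pose proof (Nat.div_mod_eq x 4). pose proof (Nat.mod_upper_bound x 4). lia. }
  apply strip_mass_ge_of_squeeze with (h := fun i => (i / 4)%nat); auto; fold K.
  - intros i Hi. unfold left_strip. rewrite Nat.leb_le. pose proof (Hdiv i). lia.
  - intros i j Hij. pose proof (Hdiv i). pose proof (Hdiv j). lia.
  - intros b. exists [4 * b; 4 * b + 1; 4 * b + 2; 4 * b + 3]%nat. split; [simpl; lia|].
    intros a _ E. pose proof (Hdiv a). rewrite E in *. simpl. lia.
Qed.

Lemma right_strip_mass n r eps : 0 <= r -> 0 < eps ->
  1 <= 16 * stat_mass n r eps (fun x => right_strip (lattice_side n eps) (fst x)).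
Proof.
  intros Hr He. replace 16 with (INR 4 ^ 2) by (simpl; ring).
  set (K := lattice_side n eps).
  assert (Hdiv : forall x, (4 * (x / 4) <= x < 4 * (x / 4) + 4)%nat).
  { intros x. pose proof (Nat.div_mod_eq x 4). pose proof (Nat.mod_upper_bound x 4). lia. }
  apply strip_mass_ge_of_squeeze with (h := fun i => (K - (K - i) / 4)%nat); auto; fold K.
  - intros i Hi. unfold right_strip. rewrite Nat.leb_le. pose proof (Hdiv (K - i)%nat). lia.
  - intros i j Hij. pose proof (Hdiv (K - i)%nat). pose proof (Hdiv (K - j)%nat). lia.
  - intros b. exists [K - 4 * (K - b); K - (4 * (K - b) + 1); K - (4 * (K - b) + 2);
                      K - (4 * (K - b) + 3)]%nat.
    split; [simpl; lia|]. intros a Ha E. pose proof (Hdiv (K - a)%nat). simpl. lia.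
Qed.

Lemma strips_gap K a b :
  left_strip K a = true -> right_strip K b = true -> (b <= K)%nat -> (K + 2 * a <= 2 * b)%nat.
Proof. unfold left_strip, right_strip. rewrite !Nat.leb_le. lia. Qed.

(** * The law of the stationary trajectory *)

Lemma init_weight_nonneg n r eps c : 0 <= r -> 0 < eps -> 0 <= init_weight n r eps c.
Proof. intros. apply Rprod_map_nonneg. intros; apply pi_stat_nonneg; auto. Qed.

Lemma chain_weight_nonneg n r eps rest c : 0 <= chain_weight n r eps c rest.
Proof.
  revert c; induction rest; intros c; simpl; [lra|]. apply Rmult_le_pos; auto.
  apply Rprod_map_nonneg. intros; apply trans_nonneg.
Qed.

Lemma init_weight_sum n r eps : 0 <= r -> 0 < eps ->
  Rsum (map (init_weight n r eps) (all_lists (lattice n eps) n)) = 1.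
Proof.
  intros Hr He. unfold init_weight.
  rewrite (Rsum_all_lists_Rprod _ _ _ (fun _ => pi_stat n r eps)).
  rewrite (Rprod_map_ext_in _ (fun _ => 1)) by (intros; apply pi_stat_sum; auto).
  rewrite Rprod_map_const. apply pow1.
Qed.

Lemma step_weight_sum n r eps c : 0 <= r ->
  (forall i, (i < n)%nat -> In (nth i c dpt) (lattice n eps)) ->
  Rsum (map (step_weight n r eps c) (all_lists (lattice n eps) n)) = 1.
Proof.
  intros Hr Hc. unfold step_weight.
  rewrite (Rsum_all_lists_Rprod _ _ _ (fun i => trans n r eps (nth i c dpt))).
  rewrite (Rprod_map_ext_in _ (fun _ => 1)).
  - rewrite Rprod_map_const. apply pow1.
  - intros i Hi. apply in_seq in Hi. apply trans_sum; auto. apply Hc; lia.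
Qed.

Lemma chain_weight_sum n r eps m c : 0 <= r ->
  (forall i, (i < n)%nat -> In (nth i c dpt) (lattice n eps)) ->
  Rsum (map (chain_weight n r eps c) (all_lists (all_lists (lattice n eps) n) m)) = 1.
Proof.
  intros Hr. revert c; induction m; intros c Hc; [simpl; lra|].
  cbn [all_lists]. rewrite Rsum_flat_map_cons.
  rewrite (Rsum_map_ext_in _ (step_weight n r eps c)); [apply step_weight_sum; auto|].
  intros c' Hc'. cbn [chain_weight].
  rewrite Rsum_map_scal, IHm; [ring|]. intros i Hi. eapply In_all_lists; eauto.
Qed.

Definition avoids (n : nat) (S : point -> bool) (c : config) : bool :=
  forallb (fun k => negb (S (nth k c dpt))) (seq 0 n).

Lemma init_weight_avoids_sum n r eps S : 0 <= r -> 0 < eps ->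
  Rsum (map (fun c => init_weight n r eps c * (if avoids n S c then 1 else 0))
            (all_lists (lattice n eps) n))
  = (1 - stat_mass n r eps S) ^ n.
Proof.
  intros Hr He.
  rewrite (Rsum_map_ext_in _ (fun c => Rprod (map (fun i =>
             pi_stat n r eps (nth i c dpt) * (if negb (S (nth i c dpt)) then 1 else 0)) (seq 0 n)))).
  2:{ intros c _. unfold init_weight, avoids. rewrite Rprod_map_indicator, Rprod_map_mult.
      reflexivity. }
  rewrite (Rsum_all_lists_Rprod _ _ _
             (fun _ x => pi_stat n r eps x * (if negb (S x) then 1 else 0))).
  rewrite (Rprod_map_ext_in _ (fun _ => 1 - stat_mass n r eps S)).
  - rewrite Rprod_map_const, length_seq. reflexivity.
  - intros i _. rewrite <- stat_mass_compl by auto. unfold stat_mass.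
    apply Rsum_map_ext_in. intros x _. destruct (S x); simpl; ring.
Qed.

Lemma weighted_union_bound (w : R) (e a b : bool) : 0 <= w ->
  (w <> 0 -> e = false -> a || b = true) ->
  w * (1 - (if a then 1 else 0) - (if b then 1 else 0)) <= (if e then w else 0).
Proof.
  intros Hw H. destruct (Req_dec w 0) as [->|Hw0]; [destruct e, a, b; lra|].
  destruct e; [destruct a, b; lra|].
  specialize (H Hw0 eq_refl). destruct a, b; simpl in H; try discriminate; lra.
Qed.

Lemma prob_ge_union_bound n r eps H (E : list config -> bool) (A B : point -> bool) :
  0 <= r -> 0 < eps -> (0 < H)%nat ->
  (forall traj : list config, In traj (all_lists (all_lists (lattice n eps) n) H) ->
     traj_weight n r eps traj <> 0 -> E traj = false ->
     avoids n A (nth 0 traj []) || avoids n B (nth 0 traj []) = true) ->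
  prob n r eps H E >= 1 - (1 - stat_mass n r eps A) ^ n - (1 - stat_mass n r eps B) ^ n.
Proof.
  intros Hr He HH Hbad. destruct H as [|H]; [lia|].
  set (M := all_lists (lattice n eps) n).
  set (ind := fun (S : point -> bool) c => if avoids n S c then 1 else 0).
  assert (Hlow : Rsum (map (fun c => init_weight n r eps c * (1 - ind A c - ind B c)) M)
                 = 1 - (1 - stat_mass n r eps A) ^ n - (1 - stat_mass n r eps B) ^ n).
  { rewrite <- !(init_weight_avoids_sum n r eps) by auto.
    rewrite <- (init_weight_sum n r eps Hr He) at 1. rewrite <- !Rsum_map_minus.
    apply Rsum_map_ext_in. intros; unfold ind; ring. }
  unfold prob. rewrite Rsum_map_filter. cbn [all_lists]. rewrite Rsum_flat_map_cons, <- Hlow.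
  apply Rle_ge, Rsum_map_le. intros c Hc.
  transitivity (Rsum (map (fun rest =>
    init_weight n r eps c * (1 - ind A c - ind B c) * chain_weight n r eps c rest) (all_lists M H))).
  { rewrite Rsum_map_scal, chain_weight_sum by (auto; intros; eapply In_all_lists; eauto). lra. }
  apply Rsum_map_le. intros rest Hrest.
  replace (init_weight n r eps c * (1 - ind A c - ind B c) * chain_weight n r eps c rest)
    with (traj_weight n r eps (c :: rest) * (1 - ind A c - ind B c))
    by (simpl; ring).
  apply weighted_union_bound.
  - apply Rmult_le_pos; [apply init_weight_nonneg; auto|apply chain_weight_nonneg].
  - intros Hw HE. apply (Hbad (c :: rest)); auto.
    cbn [all_lists]. apply in_flat_map. exists c. split; auto. apply in_map; auto.
Qed.

(** * Flooding cannot outrun the nodes *)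

Definition moves_within (n : nat) (r eps : R) (traj : list config) : Prop :=
  forall t k, (S t < length traj)%nat -> (k < n)%nat ->
  dist_pt eps (nth k (nth t traj []) dpt) (nth k (nth (S t) traj []) dpt) <= r.

Lemma chain_weight_moves_within n r eps rest c :
  chain_weight n r eps c rest <> 0 -> moves_within n r eps (c :: rest).
Proof.
  revert c; induction rest as [|c' rest IH]; intros c Hc t k Ht Hk; simpl in Ht; [lia|].
  cbn [chain_weight] in Hc.
  assert (H1 : step_weight n r eps c c' <> 0) by (intro E; apply Hc; rewrite E; ring).
  assert (H2 : chain_weight n r eps c' rest <> 0) by (intro E; apply Hc; rewrite E; ring).
  destruct t as [|t].
  - apply (trans_neq0_dist_le n). apply (Rprod_map_neq0 _ _ _ H1). apply in_seq; lia.
  - apply (IH c' H2 t k); auto. simpl; lia.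
Qed.

Lemma traj_weight_moves_within n r eps traj :
  traj_weight n r eps traj <> 0 -> moves_within n r eps traj.
Proof.
  destruct traj as [|c rest]; [intros _ t k Ht; simpl in Ht; lia|].
  intros Hw. apply chain_weight_moves_within. intro E; apply Hw; simpl; rewrite E; ring.
Qed.

Lemma firstn_S_snoc {A} (l : list A) t d : (t < length l)%nat ->
  firstn (S t) l = firstn t l ++ [nth t l d].
Proof.
  revert t; induction l; intros t Ht; simpl in Ht; [lia|].
  destruct t; simpl; auto. f_equal. rewrite <- IHl by lia. reflexivity.
Qed.

Lemma infected_S n Rr eps s traj t : (t < length traj)%nat ->
  infected n Rr eps s (firstn (S t) traj) =
  flood_step n Rr eps (infected n Rr eps s (firstn t traj)) (nth t traj []).
Proof.
  intros Ht. unfold infected. rewrite (firstn_S_snoc traj t []) by auto.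
  rewrite fold_left_app. reflexivity.
Qed.

Section Reach.
Variables (n : nat) (r Rr eps : R) (traj : list config).
Hypothesis HRr : 0 <= Rr.
Hypothesis Hmoves : moves_within n r eps traj.

Local Notation pos t k := (nth k (nth t traj []) dpt).

Lemma node_within_reach t k : (t < length traj)%nat -> (k < n)%nat ->
  dist_pt eps (pos 0 k) (pos t k) <= INR t * r.
Proof.
  intros Ht Hk. induction t as [|t IH]; [rewrite dist_pt_refl; simpl; lra|].
  rewrite S_INR. pose proof (IH ltac:(lia)). pose proof (Hmoves t k Ht Hk).
  pose proof (dist_pt_triangle eps (pos 0 k) (pos (S t) k) (pos t k)). lra.
Qed.

(* A newly informed node is within [R] of an informed node, which itself moved at most [r]. *)
Lemma infected_within_reach s t k : (t < length traj)%nat -> (k < n)%nat ->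
  infected n Rr eps s (firstn t traj) k = true ->
  dist_pt eps (pos 0 s) (pos t k) <= INR t * (Rr + r).
Proof.
  revert k; induction t as [|t IH]; intros k Ht Hk HI.
  - unfold infected in HI; simpl in HI. apply Nat.eqb_eq in HI. subst.
    rewrite dist_pt_refl. simpl; lra.
  - rewrite infected_S in HI by lia. unfold flood_step in HI. rewrite S_INR.
    pose proof (Hmoves t k Ht Hk).
    apply orb_true_iff in HI. destruct HI as [HI|HI].
    + pose proof (IH k ltac:(lia) Hk HI).
      pose proof (dist_pt_triangle eps (pos 0 s) (pos (S t) k) (pos t k)). nra.
    + apply existsb_exists in HI. destruct HI as [j [Hj HI]].
      apply in_seq in Hj. apply andb_true_iff in HI. destruct HI as [HIj Hadj].
      pose proof (IH j ltac:(lia) ltac:(lia) HIj).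
      unfold adj, Rleb in Hadj. destruct Rle_dec as [Hd|]; [|discriminate].
      pose proof (dist_pt_triangle eps (pos 0 s) (pos (S t) k) (pos t j)).
      pose proof (dist_pt_triangle eps (pos t j) (pos (S t) k) (pos t k)). nra.
Qed.

Lemma flooded_initially_close s t : (t < length traj)%nat ->
  full n (infected n Rr eps s (firstn t traj)) = true ->
  forall k, (k < n)%nat -> dist_pt eps (pos 0 s) (pos 0 k) <= 2 * INR t * (Rr + r).
Proof.
  intros Ht Hfull k Hk.
  assert (HI : infected n Rr eps s (firstn t traj) k = true).
  { unfold full in Hfull. rewrite forallb_forall in Hfull. apply Hfull, in_seq; lia. }
  pose proof (infected_within_reach s t k Ht Hk HI). pose proof (node_within_reach t k Ht Hk).
  pose proof (dist_pt_triangle eps (pos 0 s) (pos 0 k) (pos t k)).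
  rewrite (dist_pt_sym eps (pos t k)) in *. pose proof (pos_INR t). nra.
Qed.

End Reach.

Lemma flood_ge_false_flooded n Rr eps H tau traj s : (s < n)%nat ->
  flood_ge n Rr eps H tau traj = false ->
  exists t, INR t < tau /\ full n (infected n Rr eps s (firstn t traj)) = true.
Proof.
  intros Hs HE. unfold flood_ge in HE.
  assert (Hall : forallb (fun t => if Rltb (INR t) tau
                   then negb (full n (infected n Rr eps s (firstn t traj))) else true)
                   (seq 0 (S H)) = false).
  { apply not_true_iff_false. intro Hall. apply not_true_iff_false in HE. apply HE.
    apply existsb_exists. exists s. split; [apply in_seq; lia|exact Hall]. }
  apply forallb_false in Hall. destruct Hall as [t [_ Ht]]. exists t.
  unfold Rltb in Ht. destruct (Rlt_dec (INR t) tau); [|discriminate].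
  split; auto. apply negb_false_iff; auto.
Qed.

Lemma strips_far_apart n eps p q : 0 < eps <= 1 ->
  In p (lattice n eps) -> In q (lattice n eps) ->
  left_strip (lattice_side n eps) (fst p) = true ->
  right_strip (lattice_side n eps) (fst q) = true ->
  (sqrt (INR n) - 1) / 2 < dist_pt eps p q.
Proof.
  intros [He He1] Hp Hq Hl Hr. apply In_lattice in Hp, Hq; auto.
  destruct (lattice_side_spec n eps He) as [_ HK].
  pose proof (strips_gap _ _ _ Hl Hr (proj1 Hq)) as Hgap.
  apply le_INR in Hgap. rewrite plus_INR, !mult_INR in Hgap. simpl INR in Hgap.
  pose proof (dist_pt_ge_fst eps p q) as Hd.
  pose proof (pos_INR (lattice_side n eps)).
  rewrite Rabs_minus_sym, Rabs_right in Hd by (apply Rle_ge; nra).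
  assert (Hlb : lat_bound n eps * eps = sqrt (INR n)) by (unfold lat_bound; field; lra).
  nra.
Qed.

Lemma fast_flooding_avoids_a_strip n r Rr eps tau (traj : list config) :
  0 <= r -> 0 < eps <= 1 -> 0 < Rr -> (0 < n)%nat ->
  tau <= INR (length traj) -> 4 * tau * (Rr + r) <= (sqrt (INR n) - 1) / 2 ->
  (forall k, (k < n)%nat -> In (nth k (nth 0 traj []) dpt) (lattice n eps)) ->
  moves_within n r eps traj -> flood_ge n Rr eps (length traj) tau traj = false ->
  avoids n (fun x => left_strip (lattice_side n eps) (fst x)) (nth 0 traj []) ||
  avoids n (fun x => right_strip (lattice_side n eps) (fst x)) (nth 0 traj []) = true.
Proof.
  intros Hr Heps HRr Hn Hlen Htau Hlat Hmoves HE.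
  destruct (flood_ge_false_flooded _ _ _ _ _ _ 0 Hn HE) as [t [Ht Hfull]].
  assert (Htl : (t < length traj)%nat) by (apply INR_lt; lra).
  assert (Hclose : forall k, (k < n)%nat ->
            dist_pt eps (nth 0 (nth 0 traj []) dpt) (nth k (nth 0 traj []) dpt) < 2 * tau * (Rr + r)).
  { intros k Hk. pose proof (flooded_initially_close n r Rr eps traj ltac:(lra)
                               Hmoves 0 t Htl Hfull k Hk).
    assert (INR t * (Rr + r) < tau * (Rr + r)) by (apply Rmult_lt_compat_r; lra). lra. }
  set (SL := fun x : point => left_strip (lattice_side n eps) (fst x)).
  set (SR := fun x : point => right_strip (lattice_side n eps) (fst x)).
  destruct (avoids n SL (nth 0 traj [])) eqn:EA; [reflexivity|].
  destruct (avoids n SR (nth 0 traj [])) eqn:EB; [reflexivity|]. exfalso.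
  apply forallb_false in EA. destruct EA as [k1 [Hk1 E1]]. apply negb_false_iff in E1.
  apply forallb_false in EB. destruct EB as [k2 [Hk2 E2]]. apply negb_false_iff in E2.
  apply in_seq in Hk1, Hk2.
  pose proof (strips_far_apart n eps _ _ Heps (Hlat k1 ltac:(lia)) (Hlat k2 ltac:(lia)) E1 E2).
  pose proof (Hclose k1 ltac:(lia)). pose proof (Hclose k2 ltac:(lia)).
  set (c := nth 0 traj []) in *.
  pose proof (dist_pt_triangle eps (nth k1 c dpt) (nth k2 c dpt) (nth 0 c dpt)).
  pose proof (dist_pt_sym eps (nth k1 c dpt) (nth 0 c dpt)). lra.
Qed.

Lemma one_plus_pow_ge x m : 0 <= x ->
  1 + INR m * x + INR m * (INR m - 1) / 2 * x ^ 2 <= (1 + x) ^ m.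
Proof.
  intros Hx. induction m; [simpl; lra|].
  rewrite S_INR. cbn [pow]. pose proof (pos_INR m). assert (0 <= x ^ 2) by nra.
  apply Rle_trans with ((1 + x) * (1 + INR m * x + INR m * (INR m - 1) / 2 * x ^ 2)).
  - assert (0 <= INR m * (INR m - 1)).
    { destruct m; [simpl; lra|]. rewrite S_INR. pose proof (pos_INR m). nra. }
    assert (0 <= INR m * (INR m - 1) * x ^ 3) by (apply Rmult_le_pos; [auto|apply pow_le; lra]).
    simpl pow in *. nra.
  - apply Rmult_le_compat_l; lra.
Qed.

Lemma two_pow_15_16_le_inv m : (901 <= m)%nat -> 2 * (15 / 16) ^ m <= 1 / INR m.
Proof.
  intros Hm. apply le_INR in Hm. replace (INR 901) with 901 in Hm by (simpl; lra).
  pose proof (one_plus_pow_ge (1 / 15) m ltac:(lra)) as B.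
  replace (1 + 1 / 15) with (16 / 15) in B by field.
  assert (Hy : (15 / 16) ^ m * (16 / 15) ^ m = 1).
  { rewrite <- Rpow_mult_distr. replace (15 / 16 * (16 / 15)) with 1 by field. apply pow1. }
  assert (Hy2 : 2 * INR m <= (16 / 15) ^ m) by (eapply Rle_trans; [|exact B]; nra).
  assert (0 <= (15 / 16) ^ m) by (apply pow_le; lra).
  apply Rmult_le_reg_r with (INR m * (16 / 15) ^ m); [nra|].
  replace (1 / INR m * (INR m * (16 / 15) ^ m)) with ((16 / 15) ^ m) by (field; lra).
  replace (2 * (15 / 16) ^ m * (INR m * (16 / 15) ^ m))
    with (2 * INR m * ((15 / 16) ^ m * (16 / 15) ^ m)) by ring.
  rewrite Hy. lra.
Qed.

Lemma avoid_prob_le n r eps S : 0 <= r -> 0 < eps ->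
  1 <= 16 * stat_mass n r eps S -> (1 - stat_mass n r eps S) ^ n <= (15 / 16) ^ n.
Proof.
  intros Hr He HS. apply pow_incr. split; [|lra].
  rewrite <- stat_mass_compl by auto. apply stat_mass_nonneg; auto.
Qed.

Lemma horizon_spec tau : 0 < tau -> (0 < horizon tau)%nat /\ tau < INR (horizon tau).
Proof.
  intros Htau. destruct (archimed tau) as [U1 _]. unfold horizon.
  assert (0 < up tau)%Z by (apply lt_0_IZR; lra).
  split; [lia|]. rewrite INR_IZR_INZ, Z2Nat.id by lia. exact U1.
Qed.

Lemma prob_flooding_ge_strip_bound n r Rr eps tau :
  0 <= r -> 0 < eps <= 1 -> 0 < Rr -> (0 < n)%nat -> 0 < tau ->
  4 * tau * (Rr + r) <= (sqrt (INR n) - 1) / 2 ->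
  prob_flooding_ge n r Rr eps tau >=
  1 - (1 - stat_mass n r eps (fun x => left_strip (lattice_side n eps) (fst x))) ^ n
    - (1 - stat_mass n r eps (fun x => right_strip (lattice_side n eps) (fst x))) ^ n.
Proof.
  intros Hr Heps HRr Hn Htau Hreach. destruct (horizon_spec tau Htau) as [HH Hlt].
  apply prob_ge_union_bound; auto; try lra. intros traj Htraj Hw HE.
  assert (Hlen : length traj = horizon tau) by (eapply all_lists_length; eauto).
  rewrite <- Hlen in HE.
  apply (fast_flooding_avoids_a_strip n r Rr eps tau traj); auto; try rewrite Hlen; try lra.
  - intros k Hk. apply (In_all_lists _ _ n); auto. apply (In_all_lists _ _ (horizon tau)); auto.
  - apply (traj_weight_moves_within n r eps traj Hw).
Qed.

Theorem mainTheorem9 :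
  exists c : R, 0 < c /\
  exists N : nat, forall n : nat, (N <= n)%nat ->
  forall r eps Rr : R, 0 <= r -> 0 < eps <= 1 -> eps < Rr ->
    prob_flooding_ge n r Rr eps (c * sqrt (INR n) / (Rr + r)) >= 1 - 1 / INR n.
Proof.
  exists (1 / 32). split; [lra|]. exists 901%nat. intros n Hn r eps Rr Hr [He He1] HeR.
  assert (Hsqrt : 2 <= sqrt (INR n)).
  { rewrite <- (sqrt_square 2) by lra. apply sqrt_le_1_alt. apply le_INR in Hn. simpl in *; lra. }
  set (tau := 1 / 32 * sqrt (INR n) / (Rr + r)).
  assert (Htau : 0 < tau) by (apply Rdiv_lt_0_compat; lra).
  assert (Hreach : 4 * tau * (Rr + r) <= (sqrt (INR n) - 1) / 2)
    by (unfold tau; field_simplify; lra).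
  pose proof (prob_flooding_ge_strip_bound n r Rr eps tau
                Hr (conj He He1) ltac:(lra) ltac:(lia) Htau Hreach).
  pose proof (avoid_prob_le n r eps _ Hr He (left_strip_mass n r eps Hr He)).
  pose proof (avoid_prob_le n r eps _ Hr He (right_strip_mass n r eps Hr He)).
  pose proof (two_pow_15_16_le_inv n Hn).
  lra.
Qed.
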